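(* For all integers $n\geq 0$, $k\geq 1$ and $i\geq 0$, \begin{align*} \bar a_{2^ki+\frac{2^k-6}{2}}(8n+7)&\equiv 0 \pmod{2^{k+3}},\\ \bar a_{2^ki+\frac{2^k-2}{2}}(8n+7)&\equiv 0 \pmod{2^{k+3}}. \end{align*}
   Context: For an integer $k\geq 1$ let $f_k:=\prod_{n\geq 1}(1-q^{kn})$. For an integer $c$, $\bar a_c(n)$ denotes the coefficient of $q^n$ in the power series $\dfrac{f_4^{c-1}}{f_1^2f_2^{2c-3}}$, i.e. $\sum_{n\geq 0}\bar a_c(n)q^n=\dfrac{f_4^{c-1}}{f_1^2f_2^{2c-3}}$ (for $c\geq1$ these are the generalized overcubic partition numbers). *)

From mathcomp Require Import all_boot all_order all_algebra.
Set Implicit Arguments. Unset Strict Implicit. Unset Printing Implicit Defensive.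
Import Order.TTheory GRing.Theory Num.Theory.
Local Open Scope ring_scope.

(* For k >= 1, f_k = prod_{m>=1} (1 - q^{k m}).  Modulo q^{N+1} we have
     f_k      == prod_{m=1}^{N} (1 - q^{k m}),
     f_k^{-1} == prod_{m=1}^{N} sum_{t=0}^{N} q^{k m t}.
   [eta_trunc k e N] is a polynomial congruent to f_k^e modulo q^{N+1},
   for any integer exponent e (Negz m = -(m+1)). *)
Definition eta_trunc (k : nat) (e : int) (N : nat) : {poly int} :=
  match e with
  | Posz m => (\prod_(1 <= j < N.+1) (1 - 'X^(k * j))) ^+ m
  | Negz m => (\prod_(1 <= j < N.+1) \sum_(0 <= t < N.+1) 'X^(k * j * t)) ^+ m.+1
  end.

Definition abar (c : int) (n : nat) : int :=
  (eta_trunc 4 (c - 1) n * eta_trunc 1 (-2) n * eta_trunc 2 (- (2 * c - 3)) n)`_n.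

From mathcomp Require Import all_boot all_order all_algebra.
From mathcomp Require Import ring zify.
(* Write φ(q) = Σ_(r ∈ ℤ) q^(r²), truncated as [theta 'X 1 n].  Gauss's identities
   φ(q) = f₂⁵/(f₁² f₄²) and φ(−q²) = f₂²/f₄, obtained here from a finite form of
   Jacobi's triple product, turn the generating function of ā_c into
   φ(q) φ(−q²)^-(c+1).  For both families, c + 1 = M − 2b with b ∈ {0,1} and
   2^(k−1) | M.  As φ(−q²) ≡ 1 (mod 2), φ(−q²)^(2^(k+2)) ≡ 1 (mod 2^(k+3)), so
   modulo 2^(k+3) the series is φ(q) φ(−q²)^K with K = (2^(k+2) − 1) M + 2b.
   Split φ(q) = E + 2O and φ(−q²) = B + 2U, with E supported on even exponents,
   O on exponents ≡ 1, B on exponents ≡ 0 and U on exponents ≡ 2 (mod 8).  In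
   the binomial expansion of (B + 2U)^K, the term 2^i C(K, i) B^(K−i) U^i meets
   2O in an exponent ≡ 7 (mod 8) only if i ≡ 3 (mod 4), and then 2^(k−1)
   divides C(K, i). *)

Set Implicit Arguments. Unset Strict Implicit. Unset Printing Implicit Defensive.
Import Order.TTheory GRing.Theory Num.Theory.
Local Open Scope ring_scope.

Section PolyCongruence.
Context {R : comNzRingType}.
Implicit Types (m : R) (p q r : {poly R}).

Definition congX m N p q :=
  exists C D : {poly R}, p - q = m%:P * C + 'X^(N.+1) * D.

Lemma congX_refl m N p : congX m N p p.
Proof. by exists 0, 0; rewrite subrr !mulr0 addr0. Qed.

Lemma congX_sym m N p q : congX m N p q -> congX m N q p.
Proof. by case=> C [D e]; exists (- C), (- D); rewrite !mulrN -opprD -e opprB. Qed.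

Lemma congX_trans m N p q r : congX m N p q -> congX m N q r -> congX m N p r.
Proof.
case=> C1 [D1 e1] [C2 [D2 e2]]; exists (C1 + C2), (D1 + D2).
have -> : p - r = (p - q) + (q - r) by ring.
by rewrite e1 e2; ring.
Qed.

Lemma congXD m N p1 p2 q1 q2 :
  congX m N p1 q1 -> congX m N p2 q2 -> congX m N (p1 + p2) (q1 + q2).
Proof.
case=> C1 [D1 e1] [C2 [D2 e2]]; exists (C1 + C2), (D1 + D2).
have -> : p1 + p2 - (q1 + q2) = (p1 - q1) + (p2 - q2) by ring.
by rewrite e1 e2; ring.
Qed.

Lemma congXM m N p1 p2 q1 q2 :
  congX m N p1 q1 -> congX m N p2 q2 -> congX m N (p1 * p2) (q1 * q2).
Proof.
case=> C1 [D1 e1] [C2 [D2 e2]].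
exists (C1 * p2 + q1 * C2), (D1 * p2 + q1 * D2).
have -> : p1 * p2 - q1 * q2 = (p1 - q1) * p2 + q1 * (p2 - q2) by ring.
by rewrite e1 e2; ring.
Qed.

Lemma congXMl m N p q1 q2 : congX m N q1 q2 -> congX m N (p * q1) (p * q2).
Proof. exact/congXM/congX_refl. Qed.

Lemma congXMr m N p1 p2 q : congX m N p1 p2 -> congX m N (p1 * q) (p2 * q).
Proof. by move/congXM; apply; apply: congX_refl. Qed.

Lemma congXX m N p q k : congX m N p q -> congX m N (p ^+ k) (q ^+ k).
Proof.
move=> e; elim: k => [|k IH]; first exact: congX_refl.
by rewrite !exprS; apply: congXM.
Qed.

Lemma congXM1 m N p q : congX m N p 1 -> congX m N q 1 -> congX m N (p * q) 1.
Proof. by move=> hp hq; rewrite -(mulr1 1); apply: congXM. Qed.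

Lemma congXX1 m N p k : congX m N p 1 -> congX m N (p ^+ k) 1.
Proof. by move=> hp; rewrite -(expr1n _ k); apply: congXX. Qed.

Lemma congX_sum m N (I : Type) (s : seq I) (P : pred I) (F G : I -> {poly R}) :
  (forall i, P i -> congX m N (F i) (G i)) ->
  congX m N (\sum_(i <- s | P i) F i) (\sum_(i <- s | P i) G i).
Proof.
by move=> e; apply: (big_ind2 (congX m N)) => // [|*]; [apply: congX_refl | apply: congXD].
Qed.

Lemma congX_prod m N (I : Type) (s : seq I) (P : pred I) (F G : I -> {poly R}) :
  (forall i, P i -> congX m N (F i) (G i)) ->
  congX m N (\prod_(i <- s | P i) F i) (\prod_(i <- s | P i) G i).
Proof.
by move=> e; apply: (big_ind2 (congX m N)) => // [|*]; [apply: congX_refl | apply: congXM].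
Qed.

Lemma congX0 m N p q : congX 0 N p q -> congX m N p q.
Proof. by case=> C [D e]; exists 0, D; rewrite e mulr0 polyC0 !mul0r. Qed.

Lemma congX_leq m N1 N2 p q : (N1 <= N2)%N -> congX m N2 p q -> congX m N1 p q.
Proof.
move=> le [C [D e]]; exists C, ('X^(N2 - N1) * D).
by rewrite e mulrA -exprD addSn subnKC.
Qed.

Lemma congX_Xn0 m N a p : (N < a)%N -> congX m N ('X^a * p) 0.
Proof.
move=> lt; exists 0, ('X^(a - N.+1) * p).
by rewrite subr0 mulr0 add0r mulrA -exprD subnKC.
Qed.

Lemma congX_solve m N a b p q :
  congX m N (a * b) 1 -> congX m N (a * p) q -> congX m N p (b * q).
Proof.
move=> ab apq; apply: (congX_trans (q := b * (a * p))); last exact: congXMl.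
by rewrite mulrA [b * a]mulrC -[X in congX _ _ X _]mul1r; apply/congXMr/congX_sym.
Qed.

Lemma congX_cancel m N a b p q :
  congX m N (a * b) 1 -> congX m N (a * p) (a * q) -> congX m N p q.
Proof.
move=> ab apq; apply: congX_trans (congX_solve ab apq) _.
exact/congX_sym/(congX_solve ab (congX_refl _ _ _)).
Qed.

Lemma congX_compX2 m N p q :
  congX m N p q -> congX m (2 * N).+1 (p \Po 'X^2) (q \Po 'X^2).
Proof.
case=> C [D e]; exists (C \Po 'X^2), (D \Po 'X^2).
rewrite -rmorphB e rmorphD !rmorphM /= comp_polyC comp_Xn_poly -exprM.
by rewrite (_ : (2 * N).+2 = 2 * N.+1)%N // mulnS.
Qed.

End PolyCongruence.

Section QBinomial.
Context {R : comNzRingType} (x : R).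

Definition qpoch n := \prod_(1 <= j < n.+1) (1 - x ^+ j).

Lemma qpoch0 : qpoch 0 = 1.
Proof. by rewrite /qpoch big_geq. Qed.

Lemma qpochS n : qpoch n.+1 = qpoch n * (1 - x ^+ n.+1).
Proof. by rewrite /qpoch big_nat_recr. Qed.

Fixpoint qbinom n m :=
  match n, m with
  | _, 0 => 1
  | 0, _.+1 => 0
  | n'.+1, m'.+1 => qbinom n' m' + x ^+ m'.+1 * qbinom n' m'.+1
  end.

Lemma qbinomn0 n : qbinom n 0 = 1.
Proof. by case: n. Qed.

Lemma qbinomS n m : qbinom n.+1 m.+1 = qbinom n m + x ^+ m.+1 * qbinom n m.+1.
Proof. by []. Qed.

Lemma qbinom_small n m : (n < m)%N -> qbinom n m = 0.
Proof.
by elim: n m => [|n IH] [|m] // lt; rewrite qbinomS !IH ?mulr0 ?addr0 // ltnW.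
Qed.

Lemma qbinom_nn n : qbinom n n = 1.
Proof. by elim: n => // n IH; rewrite qbinomS IH qbinom_small ?mulr0 ?addr0. Qed.

Lemma qbinomSr n m : qbinom n.+1 m.+1 = x ^+ (n - m) * qbinom n m + qbinom n m.+1.
Proof.
elim: n m => [|n IH] [|m].
- by rewrite qbinomS !qbinomn0 qbinom_small // expr0; ring.
- by rewrite !qbinom_small // mulr0 addr0.
- rewrite [LHS]qbinomS [in LHS]IH [in RHS]qbinomS !qbinomn0 subn0 (exprS x n); ring.
rewrite [LHS]qbinomS {1}(IH m) {1}(IH m.+1) !qbinomS subSS.
have [le|lt] := leqP m.+1 n; last first.
  by rewrite (qbinom_small lt) (qbinom_small (leqW lt)); ring.
rewrite !mulrDr !mulrA -!exprD.
have -> : (m.+2 + (n - m.+1) = n - m + m.+1)%N by lia.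
ring.
Qed.

Lemma qbinom_qpoch n m : (m <= n)%N -> qbinom n m * qpoch m * qpoch (n - m) = qpoch n.
Proof.
elim: n m => [|n IH] [|m] // le; first by rewrite qpoch0 !mulr1.
  by rewrite qbinomn0 qpoch0 subn0 !mul1r.
have [lt|->] : (m < n)%N \/ m = n by lia.
  2: by rewrite subnn qbinom_nn qpoch0 mulr1 mul1r.
rewrite qbinomS subSS -(subnSK lt) !qpochS.
set d := (n - m.+1)%N.
have e1 := IH m (ltnW lt); have e2 := IH m.+1 lt.
rewrite -(subnSK lt) -/d qpochS in e1; rewrite qpochS -/d in e2.
have -> : qpoch n * (1 - x ^+ n.+1)
    = qpoch n * (1 - x ^+ m.+1) + x ^+ m.+1 * qpoch n * (1 - x ^+ d.+1).
  by rewrite (_ : n.+1 = m.+1 + d.+1)%N ?exprD /d; [ring | lia].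
by rewrite -{1}e1 -e2; ring.
Qed.

End QBinomial.
Arguments qbinom : simpl never.

Definition sqdist (n a : nat) := ((a - n) ^ 2 + (n - a) ^ 2)%N.

Lemma sqdist_bound n a N : (sqdist n a <= N)%N -> (n <= a + N)%N /\ (a <= n + N)%N.
Proof.
have sq_ge x : (x <= x ^ 2)%N by case: x => // x; rewrite -mulnn leq_pmulr.
by rewrite /sqdist => le; have := sq_ge (a - n)%N; have := sq_ge (n - a)%N; lia.
Qed.

Section FiniteJacobi.
Context {R : comNzRingType} (q : R).

Definition opoch (e : R) n := \prod_(1 <= j < n.+1) (1 + e * q ^+ (2 * j).-1).

Lemma opochS e n : opoch e n.+1 = opoch e n * (1 + e * q ^+ (2 * n).+1).
Proof. by rewrite /opoch big_nat_recr // mulnS. Qed.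

Definition theta (e : R) n := 1 + \sum_(1 <= r < n.+1) (e ^+ r * q ^+ (r ^ 2)) *+ 2.

Definition jacobi_term n a := q ^+ sqdist n a * qbinom (q ^+ 2) (2 * n) a.

Definition jacobi_shift k n a := if (k <= a)%N then jacobi_term n (a - k) else 0.

Definition jacobi_sum e n := \sum_(0 <= a < (2 * n).+1) e ^+ (a + n) * jacobi_term n a.

Lemma jacobi_termS n a :
  jacobi_term n.+1 a = q ^+ (2 * n).+1 * jacobi_term n a
    + (1 + q ^+ (4 * n).+2) * jacobi_shift 1 n a + q ^+ (2 * n).+1 * jacobi_shift 2 n a.
Proof.
rewrite /jacobi_shift /jacobi_term (_ : 2 * n.+1 = (2 * n).+2)%N; last by lia.
have qX k : (q ^+ 2) ^+ k = q ^+ (2 * k) by rewrite exprM.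
case: a => [|[|M]] /=.
- rewrite !qbinomn0 !mulr1 !mulr0 !addr0 -exprD; congr (_ ^+ _); rewrite /sqdist; lia.
- rewrite qbinomS [qbinom _ (2 * n).+1 1]qbinomSr !qbinomn0 subn0 subnn !qX.
  rewrite (_ : sqdist n.+1 1 = sqdist n 0); last by rewrite /sqdist; lia.
  rewrite mulrA -exprD (_ : (2 * n).+1 + sqdist n 1 = sqdist n 0 + 2 * 1)%N; last first.
    by rewrite /sqdist; case: n => [|n] //; nia.
  rewrite (_ : (4 * n).+2 = 2 * 1 + 2 * (2 * n))%N ?exprD; [ring | lia].
rewrite qbinomS !qbinomSr !subSS !subn0 !qX.
have [le|gt] := leqP M.+1 (2 * n); last first.
  rewrite (qbinom_small _ gt) (qbinom_small _ (leqW gt)) !(mulr0, addr0, add0r).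
  have [->|ltM] : M = (2 * n)%N \/ (2 * n < M)%N by lia.
    2: by rewrite qbinom_small ?mulr0.
  rewrite subnn muln0 expr0 mul1r qbinom_nn !mulr1 -exprD.
  by congr (_ ^+ _); rewrite /sqdist; nia.
have e4 : sqdist n.+1 M.+2 = sqdist n M.+1 by rewrite /sqdist; nia.
have e1 : q ^+ sqdist n M.+1 * q ^+ (2 * (2 * n - M)) = q ^+ (2 * n).+1 * q ^+ sqdist n M.
  by rewrite -!exprD; congr (_ ^+ _); rewrite /sqdist; nia.
have e2 : q ^+ sqdist n M.+1 * q ^+ (2 * M.+2) = q ^+ (2 * n).+1 * q ^+ sqdist n M.+2.
  by rewrite -!exprD; congr (_ ^+ _); rewrite /sqdist; nia.
have e3 : q ^+ (2 * M.+2) * q ^+ (2 * (2 * n - M.+1)) = q ^+ (4 * n).+2.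
  by rewrite -!exprD; congr (_ ^+ _); lia.
by rewrite e4 !mulrA -e1 -e2 -e3; ring.
Qed.

Lemma jacobi_sum_ext e n K : (2 * n < K)%N ->
  \sum_(0 <= a < K) e ^+ (a + n) * jacobi_term n a = jacobi_sum e n.
Proof.
move=> lt; rewrite /jacobi_sum (@big_cat_nat _ _ _ (2 * n).+1) //=.
rewrite [X in _ + X]big1_seq ?addr0 //.
move=> a /andP[_]; rewrite mem_index_iota => /andP[le _].
by rewrite /jacobi_term qbinom_small ?mulr0.
Qed.

Lemma sum_jacobi_shift (f : nat -> R) k n K :
  \sum_(0 <= a < K + k) f a * jacobi_shift k n a
    = \sum_(0 <= a < K) f (a + k) * jacobi_term n a.
Proof.
rewrite addnC (@big_cat_nat _ _ _ k) ?leq_addr //= [X in X + _]big1_seq ?add0r; last first.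
  move=> a /andP[_]; rewrite mem_index_iota /jacobi_shift => /andP[_ /ltn_geF ->].
  by rewrite mulr0.
rewrite -{1}(add0n k) big_addn addKn; apply: eq_bigr => a _.
by rewrite /jacobi_shift leq_addl addnK.
Qed.

Lemma jacobi_sumS e n : e ^+ 2 = 1 ->
  jacobi_sum e n.+1 = (1 + e * q ^+ (2 * n).+1) ^+ 2 * jacobi_sum e n.
Proof.
move=> e2.
have sum_shift k c : (k <= 2)%N ->
    \sum_(0 <= a < (2 * n).+3) e ^+ (a + n.+1) * (c * jacobi_shift k n a)
      = e ^+ k.+1 * c * jacobi_sum e n.
  move=> le; rewrite -(subnK (_ : k <= (2 * n).+3)%N); last by lia.
  under eq_bigr do rewrite mulrA.
  rewrite sum_jacobi_shift -(jacobi_sum_ext e (_ : 2 * n < (2 * n).+3 - k)%N); last by lia.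
  rewrite mulr_sumr; apply: eq_bigr => a _.
  by rewrite (_ : a + k + n.+1 = k.+1 + (a + n))%N ?exprD; [ring | lia].
rewrite {1}/jacobi_sum (_ : (2 * n.+1).+1 = (2 * n).+3)%N; last by lia.
under eq_bigr do rewrite jacobi_termS !mulrDr.
rewrite !big_split /= !sum_shift //.
have -> : \sum_(0 <= a < (2 * n).+3) e ^+ (a + n.+1) * (q ^+ (2 * n).+1 * jacobi_term n a)
    = e * q ^+ (2 * n).+1 * jacobi_sum e n.
  rewrite -(jacobi_sum_ext e (_ : 2 * n < (2 * n).+3)%N) ?mulr_sumr; last by lia.
  by apply: eq_bigr => a _; rewrite addnS exprS; ring.
have e3 : e ^+ 3 = e by rewrite exprS e2 mulr1.
rewrite (_ : (4 * n).+2 = (2 * n).+1 * 2)%N ?exprM; last by lia.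
rewrite sqrrD exprMn e2 e3; ring.
Qed.

(* A finite form of Jacobi's triple product identity. *)
Lemma opoch_sqr e n : e ^+ 2 = 1 -> opoch e n ^+ 2 = jacobi_sum e n.
Proof.
move=> e2; elim: n => [|n IH].
  by rewrite /opoch /jacobi_sum big_geq // big_nat1 /jacobi_term qbinomn0 expr1n !mulr1.
by rewrite jacobi_sumS // -IH opochS exprMn mulrC.
Qed.

Lemma jacobi_sum_sqdist e n : e ^+ 2 = 1 ->
  \sum_(0 <= a < (2 * n).+1) e ^+ (a + n) * q ^+ sqdist n a = theta e n.
Proof.
move=> e2; have e2k k : e ^+ (2 * k) = 1 by rewrite exprM e2 expr1n.
pose g r := e ^+ r * q ^+ (r ^ 2).
have lower : \sum_(0 <= a < n) e ^+ (a + n) * q ^+ sqdist n a = \sum_(1 <= r < n.+1) g r.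
  rewrite big_nat_rev big_add1 /=; apply: eq_big_nat => r /andP[_ lt].
  have -> : sqdist n (0 + n - r.+1) = (r.+1 ^ 2)%N.
    rewrite /sqdist add0n (_ : n - r.+1 - n = 0)%N; last by lia.
    by rewrite subKn.
  rewrite (_ : 0 + n - r.+1 + n = r.+1 + 2 * (n - r.+1))%N; last by lia.
  by rewrite exprD e2k mulr1.
have upper : \sum_(n.+1 <= a < (2 * n).+1) e ^+ (a + n) * q ^+ sqdist n a
    = \sum_(1 <= r < n.+1) g r.
  rewrite -{1}(add1n n) big_addn (_ : (2 * n).+1 - n = n.+1)%N; last by lia.
  apply: eq_big_nat => r /andP[lt _].
  have -> : sqdist n (r + n) = (r ^ 2)%N.
    rewrite /sqdist addnK (_ : n - (r + n) = 0)%N; last by lia.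
    by rewrite addn0.
  by rewrite -addnA addnn -mul2n exprD e2k mulr1.
rewrite (@big_cat_nat _ _ _ n) //=; last by lia.
rewrite (@big_ltn _ _ _ n) /=; last by lia.
rewrite lower upper (_ : sqdist n n = 0)%N /sqdist ?subnn // addnn -mul2n e2k.
by rewrite /theta sumrMnl mulr2n /g; ring.
Qed.


Lemma qpoch_odd_even n : qpoch q (2 * n) = opoch (-1) n * qpoch (q ^+ 2) n.
Proof.
elim: n => [|n IH]; first by rewrite /opoch !qpoch0 big_geq ?mul1r.
rewrite (_ : 2 * n.+1 = (2 * n).+2)%N; last by lia.
rewrite !qpochS IH opochS -exprM.
rewrite (_ : 2 * n.+1 = (2 * n).+2)%N; last by lia.
ring.
Qed.

Lemma opoch_pm n : opoch 1 n * opoch (-1) n * qpoch (q ^+ 4) n = qpoch (q ^+ 2) (2 * n).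
Proof.
elim: n => [|n IH]; first by rewrite /opoch !qpoch0 !big_geq ?mulr1.
rewrite (_ : 2 * n.+1 = (2 * n).+2)%N; last by lia.
rewrite !qpochS -IH !opochS -!exprM.
rewrite (_ : 4 * n.+1 = 2 * (2 * n).+2)%N; last by lia.
by rewrite [(2 * (2 * n).+1)%N]mulnC (exprM q (2 * n).+1 2); ring.
Qed.

End FiniteJacobi.

Lemma rmorph_qpoch (R S : comNzRingType) (f : {rmorphism R -> S}) x n :
  f (qpoch x n) = qpoch (f x) n.
Proof. by rewrite rmorph_prod; apply: eq_bigr => j _; rewrite rmorphB rmorph1 rmorphXn. Qed.

Lemma rmorph_theta (R S : comNzRingType) (f : {rmorphism R -> S}) q e n :
  f (theta q e n) = theta (f q) (f e) n.
Proof.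
rewrite rmorphD rmorph1 rmorph_sum; congr (_ + _); apply: eq_bigr => r _.
by rewrite rmorphMn rmorphM !rmorphXn.
Qed.

Lemma theta_one_add2 (R : comNzRingType) (q e : R) n :
  theta q e n = 1 + 2 * \sum_(1 <= r < n.+1) e ^+ r * q ^+ (r ^ 2).
Proof. by rewrite /theta sumrMnl -[_ *+ 2]mulr_natl. Qed.

Lemma theta_parity (R : comNzRingType) (q e : R) n :
  theta q e n = (1 + \sum_(1 <= r < n.+1 | ~~ odd r) (e ^+ r * q ^+ (r ^ 2)) *+ 2)
                + (\sum_(1 <= r < n.+1 | odd r) e ^+ r * q ^+ (r ^ 2)) *+ 2.
Proof. by rewrite /theta (bigID odd) /= -sumrMnl addrC addrA. Qed.

Section TruncatedProducts.
Variable R : comNzRingType.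

Definition qpoch_inv (x : {poly R}) N := \prod_(1 <= j < N.+1) \sum_(0 <= t < N.+1) x ^+ (j * t).

Lemma qpoch_trunc k N t : (0 < k)%N -> (N <= t)%N ->
  congX 0 N (qpoch ('X^k : {poly R}) t) (qpoch 'X^k N).
Proof.
move=> k0; elim: t => [|t IH] le; first by rewrite (_ : N = 0)%N; [apply: congX_refl | lia].
have [->|lt] := eqVneq N t.+1; first exact: congX_refl.
apply: congX_trans (IH _); last by lia.
rewrite qpochS -[X in congX _ _ _ X]mulr1; apply: congXMl; apply: congX_sym.
exists 0, ('X^(k * t.+1 - N.+1)); rewrite mulr0 add0r opprB addrC subrK -!exprM -exprD.
by congr (_ ^+ _); nia.
Qed.

Lemma qpoch_mul_inv k N : (0 < k)%N ->
  congX 0 N (qpoch ('X^k : {poly R}) N * qpoch_inv 'X^k N) 1.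
Proof.
move=> k0; rewrite /qpoch /qpoch_inv -big_split /=.
apply: (congX_trans (q := \prod_(1 <= j < N.+1) 1)); last first.
  by rewrite big1_eq; apply: congX_refl.
rewrite !big_nat; apply: congX_prod => j /andP[j1 _].
have -> : (1 - 'X^k ^+ j) * \sum_(0 <= t < N.+1) 'X^k ^+ (j * t) = 1 - ('X^k ^+ j) ^+ N.+1 :> {poly R}.
  rewrite big_mkord; under eq_bigr do rewrite exprM.
  by rewrite -[RHS]opprB subrX1 -mulNr opprB.
apply: congX_sym; exists 0, ('X^(k * j * N.+1 - N.+1)).
rewrite mulr0 add0r opprB addrC subrK -!exprM -exprD; congr (_ ^+ _); nia.
Qed.

Lemma opoch_theta (e : {poly R}) N : e ^+ 2 = 1 ->
  congX 0 N (opoch 'X e (2 * N).+1 ^+ 2 * qpoch 'X^2 N ^+ 2)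
            (qpoch 'X^2 N * theta 'X e (2 * N).+1).
Proof.
move=> e2; set n := (2 * N).+1; set P := qpoch ('X^2 : {poly R}).
rewrite opoch_sqr // -jacobi_sum_sqdist // /jacobi_sum mulr_suml mulr_sumr.
apply: congX_sum => a _; rewrite /jacobi_term; set c := e ^+ (a + n).
have [lt|le] := ltnP N (sqdist n a).
  apply: (congX_trans (q := 0)); last apply: congX_sym.
    rewrite (_ : _ * _ = 'X^(sqdist n a) * (c * qbinom 'X^2 (2 * n) a * P N ^+ 2)).
      exact: congX_Xn0.
    by ring.
  by rewrite (_ : _ * _ = 'X^(sqdist n a) * (P N * c)); [exact: congX_Xn0 | ring].
have [b1 b2] := sqdist_bound le.
have tr t : (N <= t)%N -> congX 0 N (P N) (P t) by move=> Nt; apply/congX_sym/qpoch_trunc.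
set Q := qbinom _ _ _.
rewrite (_ : _ * _ = c * 'X^(sqdist n a) * (Q * P N * P N)); last by ring.
apply: (congX_trans (q := c * 'X^(sqdist n a) * (Q * P a * P (2 * n - a)%N))).
  by apply/congXMl/congXM; [apply: congXMl|]; apply: tr; lia.
rewrite qbinom_qpoch; last by lia.
by rewrite [X in congX _ _ X]mulrC; apply/congXMr/congX_sym/tr; lia.
Qed.

Lemma qpoch_X_odd_even N :
  congX 0 N (qpoch 'X N) (opoch 'X (-1) (2 * N).+1 * qpoch ('X^2 : {poly R}) N).
Proof.
apply: (congX_trans (q := qpoch 'X (2 * (2 * N).+1))).
  by have := @qpoch_trunc 1 N (2 * (2 * N).+1); rewrite expr1 => h; apply/congX_sym/h; lia.
by rewrite qpoch_odd_even; apply/congXMl/qpoch_trunc; lia.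
Qed.

Lemma opoch_pm_trunc N :
  congX 0 N (opoch 'X 1 (2 * N).+1 * opoch 'X (-1) (2 * N).+1 * qpoch ('X^4 : {poly R}) N)
            (qpoch 'X^2 N).
Proof.
apply: (congX_trans (q := qpoch 'X^2 (2 * (2 * N).+1))); last by apply: qpoch_trunc; lia.
by rewrite -opoch_pm; apply/congXMl/congX_sym/qpoch_trunc; lia.
Qed.

Lemma gauss_theta_neg N :
  congX 0 N (qpoch ('X^2 : {poly R}) N * theta 'X (-1) (2 * N).+1) (qpoch 'X N ^+ 2).
Proof.
apply: congX_sym; apply: congX_trans (congXX 2 (qpoch_X_odd_even N)) _.
by rewrite exprMn; apply: opoch_theta; rewrite sqrrN expr1n.
Qed.

Lemma gauss_theta_negX2 N :
  congX 0 N (qpoch ('X^4 : {poly R}) N * theta 'X^2 (-1) (2 * N).+1) (qpoch 'X^2 N ^+ 2).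
Proof.
apply: (@congX_leq _ _ _ (2 * N).+1); first by lia.
have := congX_compX2 (gauss_theta_neg N).
by rewrite !rmorphM /= !rmorph_qpoch rmorph_theta /= rmorphN1 comp_polyX comp_Xn_poly -exprM -expr2.
Qed.

Lemma gauss_theta N :
  congX 0 N (theta 'X 1 (2 * N).+1 * qpoch 'X N ^+ 2 * qpoch ('X^4 : {poly R}) N ^+ 2)
            (qpoch 'X^2 N ^+ 5).
Proof.
set n := (2 * N).+1; set f1 := qpoch 'X N; set f2 := qpoch 'X^2 N; set f4 := qpoch 'X^4 N.
pose Op := opoch ('X : {poly R}) 1 n; pose Om := opoch ('X : {poly R}) (-1) n.
have jt : congX 0 N (Op ^+ 2 * f2 ^+ 2) (f2 * theta 'X 1 n) by apply: opoch_theta; rewrite expr1n.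
apply: (congX_cancel (@qpoch_mul_inv 2 N isT)); rewrite -/f2.
apply: (congX_trans (q := Op ^+ 2 * f2 ^+ 2 * (Om * f2) ^+ 2 * f4 ^+ 2)).
  rewrite (_ : f2 * _ = f2 * theta 'X 1 n * f1 ^+ 2 * f4 ^+ 2); last by ring.
  by apply/congXMr/congXM; [apply: congX_sym jt | apply/congXX/qpoch_X_odd_even].
rewrite (_ : _ * _ = f2 ^+ 4 * (Op * Om * f4) ^+ 2); last by ring.
rewrite (_ : f2 * _ = f2 ^+ 4 * f2 ^+ 2); last by ring.
exact/congXMl/congXX/opoch_pm_trunc.
Qed.

End TruncatedProducts.

Definition zpow (R : nzRingType) (A B : R) (e : int) : R :=
  match e with Posz n => A ^+ n | Negz n => B ^+ n.+1 end.

Lemma zpow_subn (R : comNzRingType) m N (A B : {poly R}) a b :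
  congX m N (A * B) 1 -> congX m N (zpow A B (a%:Z - b%:Z)) (A ^+ a * B ^+ b).
Proof.
move=> AB; have [le|lt] := leqP b a.
  rewrite subzn //= (_ : A ^+ a * B ^+ b = A ^+ (a - b) * (A * B) ^+ b); last first.
    by rewrite exprMn mulrA -exprD subnK.
  by rewrite -[X in congX _ _ X]mulr1; apply/congXMl/congX_sym/congXX1.
rewrite (_ : a%:Z - b%:Z = Negz (b - a).-1); last by rewrite NegzE; lia.
rewrite /= prednK ?subn_gt0 // (_ : A ^+ a * B ^+ b = (A * B) ^+ a * B ^+ (b - a)); last first.
  by rewrite exprMn -mulrA -exprD subnKC // ltnW.
by rewrite -[X in congX _ _ X]mul1r; apply/congXMr/congX_sym/congXX1.
Qed.

Lemma eta_trunc_zpow k e N :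
  eta_trunc k e N = zpow (qpoch 'X^k N) (qpoch_inv 'X^k N) e.
Proof.
case: e => m /=; congr (_ ^+ _); apply: eq_bigr => j _; first by rewrite exprM.
by apply: eq_bigr => t _; rewrite -exprM mulnA.
Qed.

Definition abar_series (c : int) N :=
  eta_trunc 4 (c - 1) N * eta_trunc 1 (-2) N * eta_trunc 2 (- (2 * c - 3)) N.

Section EtaQuotients.
Variable N : nat.
Local Notation f k := (qpoch ('X^k : {poly int}) N).
Local Notation g k := (qpoch_inv ('X^k : {poly int}) N).
Local Notation f1 := (qpoch ('X : {poly int}) N).
Local Notation g1 := (qpoch_inv ('X : {poly int}) N).
Local Notation phi := (theta ('X : {poly int}) 1 (2 * N).+1).
Local Notation phiN2 := (theta ('X^2 : {poly int}) (-1) (2 * N).+1).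

Definition phiN2_inv := f 4 * g 2 ^+ 2.

Lemma phi_eta : congX 0 N phi (g1 ^+ 2 * g 4 ^+ 2 * f 2 ^+ 5).
Proof.
have := gauss_theta int N; rewrite -mulrA mulrC => h; apply: congX_solve h.
rewrite (_ : _ * _ = (f1 * g1) ^+ 2 * (f 4 * g 4) ^+ 2); last by ring.
by apply: congXM1; apply: congXX1; [have := @qpoch_mul_inv int 1 N isT; rewrite expr1 |
  apply: qpoch_mul_inv].
Qed.

Lemma phiN2_eta : congX 0 N phiN2 (g 4 * f 2 ^+ 2).
Proof. exact: congX_solve (qpoch_mul_inv _ _ _) (gauss_theta_negX2 int N). Qed.

Lemma phiN2_mul_inv : congX 0 N (phiN2_inv * phiN2) 1.
Proof.
apply: (congX_trans (q := phiN2_inv * (g 4 * f 2 ^+ 2))); first exact/congXMl/phiN2_eta.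
rewrite /phiN2_inv (_ : _ * _ = (f 4 * g 4) * (f 2 * g 2) ^+ 2); last by ring.
by apply: congXM1; [|apply: congXX1]; apply: qpoch_mul_inv.
Qed.

Lemma abar_series_theta (c : int) (M b : nat) : c + 1 + 2 * b%:Z = M%:Z ->
  congX 0 N (abar_series c N) (phi * phiN2_inv ^+ M * phiN2 ^+ (2 * b)).
Proof.
move=> cM; rewrite /abar_series !eta_trunc_zpow expr1.
rewrite (_ : c - 1 = M%:Z - (2 + 2 * b)%N%:Z); last by lia.
rewrite (_ : - (2 * c - 3) = (5 + 4 * b)%N%:Z - (2 * M)%N%:Z); last by lia.
apply: (congX_trans (q := f 4 ^+ M * g 4 ^+ (2 + 2 * b) * g1 ^+ 2
                          * (f 2 ^+ (5 + 4 * b) * g 2 ^+ (2 * M)))).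
  by apply: congXM; [apply: congXMr|]; apply: zpow_subn; apply: qpoch_mul_inv.
rewrite (_ : _ * _ = phiN2_inv ^+ M * (g1 ^+ 2 * g 4 ^+ 2 * f 2 ^+ 5) * (g 4 * f 2 ^+ 2) ^+ (2 * b)).
  rewrite [phi * _]mulrC; apply/congXM/congXX/congX_sym/phiN2_eta.
  exact/congXMl/congX_sym/phi_eta.
rewrite /phiN2_inv !exprMn (_ : 4 * b = 2 * (2 * b))%N; last by lia.
by rewrite !mul2n -!addnn !exprD; ring.
Qed.

End EtaQuotients.

Section Support.
Context {R : nzRingType}.
Implicit Types (p q : {poly R}).

Definition supp_mod (d r : nat) p := forall i, p`_i != 0 -> i = r %[mod d].

Lemma coef_supp_mod d r p i : supp_mod d r p -> i != r %[mod d] -> p`_i = 0.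
Proof. by move=> sp; apply: contraNeq => /sp ->. Qed.

Lemma supp_mod_eq d r s p : supp_mod d r p -> r = s %[mod d] -> supp_mod d s p.
Proof. by move=> sp rs i /sp ->. Qed.

Lemma supp_mod_dvd d d' r p : (d' %| d)%N -> supp_mod d r p -> supp_mod d' r p.
Proof. by move=> dd sp i /sp e; rewrite -(modn_dvdm i dd) e modn_dvdm. Qed.

Lemma supp_mod1 d : supp_mod d 0 1.
Proof. by move=> [|i] //; rewrite coef1 eqxx. Qed.

Lemma supp_modXn d m : supp_mod d m 'X^m.
Proof. by move=> i; rewrite coefXn; have [->|_] := eqVneq i m; rewrite ?eqxx. Qed.

Lemma supp_modN d r p : supp_mod d r p -> supp_mod d r (- p).
Proof. by move=> sp i; rewrite coefN oppr_eq0 => /sp. Qed.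

Lemma supp_modMn d r p k : supp_mod d r p -> supp_mod d r (p *+ k).
Proof.
move=> sp i; rewrite coefMn; have [/eqP ->|/sp //] := boolP (p`_i == 0).
by rewrite mul0rn eqxx.
Qed.

Lemma supp_modD d r p q : supp_mod d r p -> supp_mod d r q -> supp_mod d r (p + q).
Proof.
move=> sp sq i; rewrite coefD; have [/eqP pi0|/sp //] := boolP (p`_i == 0).
by rewrite pi0 add0r => /sq.
Qed.

Lemma supp_mod_sum d r (I : Type) (s : seq I) (P : pred I) (F : I -> {poly R}) :
  (forall k, P k -> supp_mod d r (F k)) -> supp_mod d r (\sum_(k <- s | P k) F k).
Proof.
move=> sF; apply: (big_ind (supp_mod d r)) => // [i|]; first by rewrite coef0 eqxx.
exact: supp_modD.
Qed.

Lemma supp_modM d r s p q : supp_mod d r p -> supp_mod d s q -> supp_mod d (r + s) (p * q).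
Proof.
move=> sp sq i; rewrite coefM; apply: contraTeq => ne; rewrite negbK; apply/eqP/big1 => j _.
have [/eqP pj|/sp ej] := boolP (p`_j == 0); first by rewrite pj mul0r.
have [/eqP qj|/sq ej'] := boolP (q`_(i - j) == 0); first by rewrite qj mulr0.
by case/negP: ne; rewrite -modnDm -ej -ej' modnDm subnKC // -ltnS ltn_ord.
Qed.

Lemma supp_modX d r p k : supp_mod d r p -> supp_mod d (r * k) (p ^+ k).
Proof.
move=> sp; elim: k => [|k IH]; first by rewrite muln0 expr0; apply: supp_mod1.
by rewrite exprS mulnS; apply: supp_modM.
Qed.

End Support.
(* Otherwise [m] is implicit, as it can be read off the unfolded [supp_mod]. *)
Arguments supp_modXn {R} d m.


Lemma sqr_odd_mod8 r : odd r -> r ^ 2 = 1 %[mod 8].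
Proof.
move=> o; rewrite -(odd_double_half r) o; set s := r./2.
have [t st] : exists t, (s * s.+1 = 2 * t)%N.
  exists (s * s.+1)./2; have := odd_double_half (s * s.+1).
  by rewrite oddM andbN add0n -mul2n.
by rewrite (_ : (1 + s.*2) ^ 2 = t * 8 + 1)%N ?modnMDl //; rewrite -mul2n; nia.
Qed.

Lemma phi_split n : exists E O : {poly int},
  [/\ supp_mod 2 0 E, supp_mod 8 1 O & theta 'X 1 n = E + O *+ 2].
Proof.
rewrite theta_parity; do 2 eexists; split; last reflexivity.
  apply: supp_modD; first exact: supp_mod1.
  apply: supp_mod_sum => r ev; apply: supp_modMn; rewrite expr1n mul1r.
  have r2 : (r ^ 2 = 0 %[mod 2])%N by rewrite !modn2 oddX (negbTE ev) orbF.
  exact: supp_mod_eq (supp_modXn _ _) r2.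
apply: supp_mod_sum => r o; rewrite expr1n mul1r.
exact: supp_mod_eq (supp_modXn _ _) (sqr_odd_mod8 o).
Qed.

Lemma phiN2_split n : exists B U : {poly int},
  [/\ supp_mod 8 0 B, supp_mod 8 2 U & theta 'X^2 (-1) n = B + U *+ 2].
Proof.
rewrite theta_parity; do 2 eexists; split; last reflexivity.
  apply: supp_modD; first exact: supp_mod1.
  apply: supp_mod_sum => r ev; apply: supp_modMn.
  rewrite -signr_odd (negbTE ev) expr0 mul1r -exprM.
  have r2 : (2 * r ^ 2 = 0 %[mod 8])%N.
    rewrite -(odd_double_half r) (negbTE ev) add0n -mul2n.
    by rewrite (_ : 2 * (2 * r./2) ^ 2 = r./2 ^ 2 * 8)%N ?modnMl //; nia.
  exact: supp_mod_eq (supp_modXn _ _) r2.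
apply: supp_mod_sum => r o; rewrite -signr_odd o expr1 mulN1r -exprM.
have r2 : (2 * r ^ 2 = 2 %[mod 8])%N.
  by have := sqr_odd_mod8 o; set x := (r ^ 2)%N; lia.
exact/supp_modN/(supp_mod_eq (supp_modXn _ _) r2).
Qed.

Lemma dvdn_mul_bin j M i : (2 ^ j %| M -> 2 ^ j %| i * 'C(M, i))%N.
Proof. by case: i => [|i] dM; rewrite ?mul0n ?dvdn0 // -mul_bin_diag dvdn_mulr. Qed.

Lemma dvdn_bin_odd j M i : (2 ^ j %| M)%N -> odd i -> (2 ^ j %| 'C(M, i))%N.
Proof.
move=> dM oi; rewrite -(Gauss_dvdr _ (coprimeXl j (_ : coprime 2 i))) ?coprime2n //.
exact: dvdn_mul_bin.
Qed.

Lemma dvdn_binSS_3mod4 j M i : (2 ^ j %| M)%N -> (i %% 4 = 3)%N -> (2 ^ j %| 'C(M.+2, i))%N.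
Proof.
have oddP x : (x %% 2 = 1)%N -> odd x by move=> x1; rewrite -(@odd_mod x 2 erefl) x1.
case: i => [|[|i]] // dM i3; rewrite !binS.
rewrite (_ : _ + _ = 'C(M, i.+2) + 'C(M, i) + 'C(M, i.+1) * 2)%N; last by lia.
have [o oo io] : exists2 o, odd o & i.+1 = (o * 2)%N.
  by exists (i.+1 %/ 2)%N; [apply: oddP; lia | lia].
apply: dvdn_add; first apply: dvdn_add.
- by apply: dvdn_bin_odd => //; apply: oddP; lia.
- by apply: dvdn_bin_odd => //; apply: oddP; lia.
rewrite -(Gauss_dvdr _ (coprimeXl j (_ : coprime 2 o))) ?coprime2n // mulnCA -io mulnC.
exact: dvdn_mul_bin.
Qed.

Lemma dvdz_coef_7mod8 (E O B U : {poly int}) j M n :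
  supp_mod 2 0 E -> supp_mod 8 1 O -> supp_mod 8 0 B -> supp_mod 8 2 U ->
  (forall i, i %% 4 = 3 -> 2 ^ j %| 'C(M, i))%N -> (n %% 8 = 7)%N ->
  (2 ^+ (j + 4) %| ((E + O *+ 2) * (B + U *+ 2) ^+ M)`_n)%Z.
Proof.
move=> sE sO sB sU binM n7; rewrite exprDn mulr_sumr coef_sum; apply: rpred_sum => i _.
rewrite [(U *+ 2) ^+ _]exprMn_n !mulrnAr mulrDl mulrnAl !coefMn coefD coefMn.
set Y := B ^+ (M - i) * U ^+ i.
have sY : supp_mod 8 (0 * (M - i) + 2 * i) Y by apply: supp_modM; apply: supp_modX.
rewrite (coef_supp_mod (supp_modM sE (supp_mod_dvd _ sY))) //; last first.
  by rewrite mul0n !add0n; apply/eqP; lia.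
rewrite add0r; have [ni|ni] := eqVneq (n %% 8)%N ((1 + (0 * (M - i) + 2 * i)) %% 8)%N; last first.
  by rewrite (coef_supp_mod (supp_modM sO sY)) // !mul0rn dvdz0.
have i3 : (i %% 4 = 3)%N by move: ni; rewrite mul0n add0n; lia.
rewrite -!mulrnA -[_ *+ (2 * _)]mulr_natr; apply: dvdz_mull.
rewrite dvdzE abszX !natz /= expnD mulnC mulnA -expnS.
by apply: dvdn_mul; [apply: dvdn_exp2l; lia | apply: binM].
Qed.


Lemma exp2n_one_add2 (R : comNzRingType) (c : R) L :
  exists d, (1 + 2 * c) ^+ (2 ^ L) = 1 + 2 ^+ L.+1 * d.
Proof.
elim: L => [|L [d IH]]; first by exists c; rewrite expn0 expr1 expr1.
by exists (d + 2 ^+ L * d ^+ 2); rewrite expnS mulnC exprM IH !exprS; ring.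
Qed.

Lemma congX_inv_exp2 (R : comNzRingType) N L (W t c : {poly R}) :
  congX 0 N (W * t) 1 -> t = 1 + 2 * c -> congX (2 ^+ L.+1) N W (t ^+ (2 ^ L).-1).
Proof.
move=> Wt tc; have [d td] := exp2n_one_add2 c L; rewrite -tc in td.
apply: (congX_trans (q := W * t ^+ (2 ^ L))).
  exists (- (W * d)), 0; rewrite td rmorphXn /= polyC_natr; ring.
rewrite -[in X in congX _ _ X _](prednK (expn_gt0 2 L)) (exprS t) mulrA.
rewrite -[X in congX _ _ _ X]mul1r.
exact/congX0/congXMr.
Qed.

Lemma congX_coef (m : int) N (p q : {poly int}) : congX m N p q -> (m %| p`_N - q`_N)%Z.
Proof.
case=> C [D e]; rewrite -coefB e coefD coefCM coefXnM ltnSn addr0.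
exact: dvdz_mulr.
Qed.

Lemma abar_dvd (j M b n : nat) (c : int) : (2 ^ j %| M)%N -> (b <= 1)%N ->
  c + 1 + 2 * b%:Z = M%:Z -> (n %% 8 = 7)%N -> (2 ^+ (j + 4) %| abar c n)%Z.
Proof.
move=> jM b1 cM n7; set L := (j + 3)%N.
set phi := theta ('X : {poly int}) 1 (2 * n).+1.
set phiN2 := theta ('X^2 : {poly int}) (-1) (2 * n).+1.
have phiN2_inv_pow : congX (2 ^+ L.+1) n (phiN2_inv n) (phiN2 ^+ (2 ^ L).-1).
  exact: congX_inv_exp2 (phiN2_mul_inv n) (theta_one_add2 _ _ _).
have abar_phi :
    congX (2 ^+ L.+1) n (abar_series c n) (phi * phiN2 ^+ ((2 ^ L).-1 * M + 2 * b)).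
  apply: congX_trans (congX0 _ (abar_series_theta n cM)) _.
  by rewrite exprD (exprM phiN2) mulrA; apply/congXMr/congXMl; exact: congXX.
have [E [O [sE sO phiE]]] := phi_split (2 * n).+1.
have [B [U [sB sU phiN2E]]] := phiN2_split (2 * n).+1.
have := congX_coef abar_phi; rewrite (_ : L.+1 = j + 4)%N; last by lia.
move=> hd; rewrite -[abar c n](subrK (phi * phiN2 ^+ ((2 ^ L).-1 * M + 2 * b))`_n).
apply: rpredD hd _.
rewrite /phi /phiN2 phiE phiN2E; apply: dvdz_coef_7mod8 => // i i3.
have dM : (2 ^ j %| (2 ^ L).-1 * M)%N by apply: dvdn_mull.
case: b b1 {cM abar_phi} => [|[|//]] _; rewrite ?muln0 ?addn0 ?muln1 ?addn2.
  by apply: dvdn_bin_odd; rewrite // -(@odd_mod i 4 erefl) i3.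
exact: dvdn_binSS_3mod4.
Qed.

Theorem theorem1p8 (n k i : nat) (hk : (1 <= k)%N) :
  ((2 ^+ (k + 3) : int) %| abar ((2 ^+ k : int) * i%:Z + ((2 ^+ k - 6) %/ 2)%Z) (8 * n + 7))%Z /\
  ((2 ^+ (k + 3) : int) %| abar ((2 ^+ k : int) * i%:Z + ((2 ^+ k - 2) %/ 2)%Z) (8 * n + 7))%Z.
Proof.
have n7 : ((8 * n + 7) %% 8 = 7)%N by rewrite mulnC modnMDl.
have ek : (2 ^+ k : int) = 2 ^+ k.-1 * 2 by rewrite -exprSr prednK.
have eM : ((2 ^ k.-1 * (2 * i).+1)%N%:Z : int) = 2 ^+ k.-1 * (2 * i%:Z + 1).
  by rewrite PoszM -natz natrX; congr (_ * _); lia.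
rewrite (_ : (k + 3 = k.-1 + 4)%N); last by lia.
have jM : (2 ^ k.-1 %| 2 ^ k.-1 * (2 * i).+1)%N by apply: dvdn_mulr.
split; [apply: (abar_dvd (b := 1)) jM _ _ n7 | apply: (abar_dvd (b := 0)) jM _ _ n7];
  rewrite // eM ek.
- by rewrite (_ : _ - 6 = (2 ^+ k.-1 - 3) * 2) ?mulzK //; ring.
- by rewrite (_ : _ - 2 = (2 ^+ k.-1 - 1) * 2) ?mulzK //; ring.
Qed.
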